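(* In the roundabout exploration process described in the context, let $t\in[N]$, let $s=|A(t)|$, and let $1\le i_1<i_2<\dots<i_s\le N$ be the initial states of the agents in $A(t)$ (so $A(t)=\{a_{i_1},\dots,a_{i_s}\}$). Then $[\![i_\ell,i_{\ell+1}[\![\subseteq D_{i_\ell}(t)$ for every $\ell\in[s-1]$, and $[\![i_s,i_1[\![\subseteq D_{i_s}(t)$.
   Context: Let $n\ge 2$ and $k$ be natural numbers, $T$ a tree on an $n$-element vertex set $V$, and $N=2(n-1)$. Fix a root $r$ and a DFS tour of $T$ starting and ending at $r$ that traverses each edge of $T$ exactly twice, giving a cyclic vertex sequence $(v_1,\dots,v_N,v_{N+1})$ with $v_{N+1}=v_1=r$, and tour edges $e_i=\{v_i,v_{i+1}\}$ for $i\in[N]$. For $i,j\in[N]$ the circular interval $[\![i,j]\!]$ is $\{i,i+1,\dots,j\}$ if $i\le j$ and $\{i,\dots,N,1,\dots,j\}$ if $i>j$; $[\![i,j[\![$ denotes $[\![i,j]\!]\setminus\{j\}$. Let $\langle G_1,\dots,G_N\rangle$ be graphs on $V$, each containing all but at most $k$ edges of $T$. Roundabout exploration process: agents $a_1,\dots,a_N$ with initial states $s_i(0)=i$. For steps $t=1,\dots,N$: (Movement) for every $i\in[N]$, if $s_i(t-1)=q$ then $s_i(t)=(q\bmod N)+1$ if $e_q\in E(G_t)$, and $s_i(t)=q$ otherwise. Let $D_i(t)=[\![i,s_i(t)]\!]$ and $D_i(0)=\{i\}$. (Elimination) $A(0)=\{a_1,\dots,a_N\}$; $A(t)$ is obtained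 from $A(t-1)$ by repeatedly removing an arbitrary agent $a_i$ of the current set with $D_i(t)\subseteq\bigcup D_j(t)$ over the other agents $a_j$ of the current set, until no such agent remains. *)

(* Indices of the tour / agents are natural numbers 1..N (1-based, as in the paper). *)
From Stdlib Require Import Relation_Operators.
From mathcomp Require Import all_boot.
Set Implicit Arguments. Unset Strict Implicit. Unset Printing Implicit Defensive.

Definition simple_edges (V : finType) (E : {set {set V}}) : Prop :=
  forall e, e \in E -> exists x y : V, x != y /\ e = [set x; y].

Definition gadj (V : finType) (E : {set {set V}}) : rel V :=
  fun x y => [set x; y] \in E.

Definition is_tree (V : finType) (T : {set {set V}}) : Prop :=
  [/\ simple_edges T,
      (forall x y : V, connect (gadj T) x y) &
      ~ (exists c : seq V, 3 <= size c /\ ucycle (gadj T) c)].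

Definition tour_edge (V : finType) (v : nat -> V) (q : nat) : {set V} := [set v q; v q.+1].

(* A closed tour (v_1, ..., v_N, v_(N+1)) of T from r back to r that traverses
   every edge of T exactly twice (in a tree this is exactly a DFS tour). *)
Definition dfs_tour (V : finType) (T : {set {set V}}) (r : V) (N : nat) (v : nat -> V) : Prop :=
  [/\ v 1 = r, v N.+1 = r,
      (forall q, 1 <= q <= N -> tour_edge v q \in T) &
      (forall e, e \in T -> count (fun q => tour_edge v q == e) (iota 1 N) = 2)].

Definition cint (N i j : nat) : pred nat :=
  [pred x | if i <= j then i <= x <= j else (i <= x <= N) || (1 <= x <= j)].

Definition cint_ho (N i j : nat) : pred nat :=
  [pred x | (x \in cint N i j) && (x != j)].

Fixpoint state (V : finType) (N : nat) (v : nat -> V) (G : nat -> {set {set V}})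
    (i t : nat) : nat :=
  match t with
  | 0 => i
  | t'.+1 => let q := state N v G i t' in
             if tour_edge v q \in G t'.+1 then (q %% N).+1 else q
  end.

Definition Dset (V : finType) (N : nat) (v : nat -> V) (G : nat -> {set {set V}})
    (i t : nat) : pred nat := cint N i (state N v G i t).

(* Agent a_i (identified with its initial state i) is removable from the current
   set S at time t: D_i(t) is covered by the D_j(t) of the other agents a_j of S. *)
Definition removable (V : finType) (N : nat) (v : nat -> V) (G : nat -> {set {set V}})
    (t : nat) (S : pred nat) (i : nat) : Prop :=
  forall x, x \in Dset N v G i t ->
    exists j, [/\ j \in S, j != i & x \in Dset N v G j t].

Definition elim_step (V : finType) (N : nat) (v : nat -> V) (G : nat -> {set {set V}})
    (t : nat) (S S' : pred nat) : Prop :=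
  exists i, [/\ i \in S, removable N v G t S i & S' =i [pred j | (j \in S) && (j != i)]].

Definition valid_elimination (V : finType) (N : nat) (v : nat -> V)
    (G : nat -> {set {set V}}) (A : nat -> pred nat) : Prop :=
  A 0 =i [pred i | 1 <= i <= N] /\
  forall t, 1 <= t <= N ->
    clos_refl_trans (pred nat) (elim_step N v G t) (A t.-1) (A t) /\
    (forall i, i \in A t -> ~ removable N v G t (A t) i).

(** Measure positions on the roundabout by their forward distance [cdist N a y]
    from a base point [a].  As long as an agent has not yet gone once around,
    its explored arc D_i(t) only grows; an agent that has gone once around
    covers everything, which makes every other surviving agent removable.
    Hence, by induction on t, either the arcs of the agents of A(t) cover
    1..N or A(t) has at most one agent.  In the covering case, let a and b be
    cyclically consecutive agents of A(t) and suppose a point x of the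
    half-open arc from a to b is missed by D_a(t).  The agent j covering x
    starts at or after b, so its arc runs from j around through a up to x and
    contains all of D_a(t): a would be removable. *)
From Stdlib Require Import Relation_Operators.
From mathcomp Require Import all_boot zify.
Set Implicit Arguments. Unset Strict Implicit.

Definition cdist (N a y : nat) : nat := if a <= y then y - a else y + N - a.

Lemma cdistP N a y :
  (a <= y /\ cdist N a y = y - a) \/ (y < a /\ cdist N a y = y + N - a).
Proof. by rewrite /cdist; case: leqP; [left | right]. Qed.

(* The case splits are done here rather than passed to [lia] as disjunctions,
   whose certificates are very expensive for the kernel to recheck. *)
Ltac cdist_lia :=
  repeat match goal with H : context [cdist _ _ _] |- _ => revert H end;
  repeat match goal with |- context [cdist ?N ?a ?y] =>
    let E := fresh in case: (cdistP N a y) => [[? E] | [? E]]; rewrite E; clear E end;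
  intros; lia.

Lemma mem_cint N i j x : 1 <= i <= N -> 1 <= j <= N ->
  (x \in cint N i j) = (1 <= x <= N) && (cdist N i x <= cdist N i j).
Proof. by move=> Hi Hj; rewrite inE; case: (leqP i j) => ?; apply/idP/idP; cdist_lia. Qed.

Lemma in_cint_hoxx N a x : (x \in cint_ho N a a) = false.
Proof. by rewrite !inE leqnn; apply/negbTE; lia. Qed.

Lemma mem_cint_full N i j x : 1 <= i <= N -> 1 <= j <= N ->
  cdist N i j = N.-1 -> 1 <= x <= N -> x \in cint N i j.
Proof. by move=> Hi Hj Hij Hx; rewrite mem_cint // Hx; cdist_lia. Qed.

Lemma cdist_rotate_lt N a x y j : 1 <= a <= N -> 1 <= x <= N -> 1 <= y <= N ->
  1 <= j <= N -> cdist N a y < cdist N a x < cdist N a j ->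
  cdist N j y < cdist N j x.
Proof. by move=> *; cdist_lia. Qed.

Lemma sorted_ltn_nth_leq (I : seq nat) p q : sorted ltn I ->
  p < size I -> q < size I -> p <= q -> nth 0 I p <= nth 0 I q.
Proof.
rewrite ltn_sorted_uniq_leq => /andP[_ leqI] Hp Hq.
exact: (sorted_leq_nth leq_trans leqnn 0 leqI _ _ Hp Hq).
Qed.

Section SortedGaps.

Variables (N : nat) (I : seq nat).
Hypotheses (ltn_I : sorted ltn I) (I_range : forall j : nat, j \in I -> 1 <= j <= N).

Lemma sorted_cdist_next l (j : nat) : l.+1 < size I -> j \in I -> j != nth 0 I l ->
  cdist N (nth 0 I l) (nth 0 I l.+1) <= cdist N (nth 0 I l) j.
Proof.
move=> Hl jI.
have [p Hp <-] : exists2 p, p < size I & nth 0 I p = j by apply/(nthP 0).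
move=> Npl.
have := @I_range (nth 0 I p) (mem_nth 0 Hp); have := @I_range (nth 0 I l.+1) (mem_nth 0 Hl).
have ltl : l < size I by lia.
have := @I_range (nth 0 I l) (mem_nth 0 ltl).
have := sorted_ltn_nth ltn_trans 0 ltn_I _ _ ltl Hl (ltnSn l).
have [Hpl | Hpl | Epl] := ltngtP p l; last by rewrite Epl eqxx in Npl.
- by have := sorted_ltn_nth ltn_trans 0 ltn_I _ _ Hp ltl Hpl; cdist_lia.
- by have := sorted_ltn_nth_leq ltn_I Hl Hp Hpl; cdist_lia.
Qed.

Lemma sorted_cdist_wrap (j : nat) : 0 < size I -> j \in I -> j != nth 0 I (size I).-1 ->
  cdist N (nth 0 I (size I).-1) (nth 0 I 0) <= cdist N (nth 0 I (size I).-1) j.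
Proof.
move=> HI jI.
have [p Hp <-] : exists2 p, p < size I & nth 0 I p = j by apply/(nthP 0).
move=> Np.
have Hlast : (size I).-1 < size I by lia.
have Hplast : p < (size I).-1.
  by rewrite ltn_neqAle -ltnS prednK // Hp andbT; apply: contraNneq Np => ->.
have := sorted_ltn_nth ltn_trans 0 ltn_I _ _ Hp Hlast Hplast.
have := sorted_ltn_nth_leq ltn_I HI Hp (leq0n p).
have := @I_range (nth 0 I p) (mem_nth 0 Hp); have := @I_range (nth 0 I 0) (mem_nth 0 HI).
have := @I_range (nth 0 I (size I).-1) (mem_nth 0 Hlast).
by cdist_lia.
Qed.

End SortedGaps.

Section Roundabout.

Variables (V : finType) (N : nat) (v : nat -> V) (G : nat -> {set {set V}}).
Hypothesis N_gt1 : 1 < N.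

Local Notation st := (state N v G).
Local Notation D := (Dset N v G).
Local Notation agents := [pred i : nat | 1 <= i <= N].

Definition covers (t : nat) (S : pred nat) : Prop :=
  forall x, 1 <= x <= N -> exists2 j, j \in S & x \in D j t.

Definition stable (t : nat) (S : pred nat) : Prop :=
  forall i, i \in S -> ~ removable N v G t S i.

Lemma state_in_range i t : 1 <= i <= N -> 1 <= st i t <= N.
Proof.
move=> Hi; elim: t => [|t IH] //=; case: ifP => _ //.
by have := ltn_pmod (st i t) (ltnW N_gt1); lia.
Qed.

Lemma mem_Dset i t x : 1 <= i <= N ->
  (x \in D i t) = (1 <= x <= N) && (cdist N i x <= cdist N i (st i t)).
Proof. by move=> Hi; rewrite /Dset mem_cint // state_in_range. Qed.

Lemma Dset_full i t x : 1 <= i <= N -> cdist N i (st i t) = N.-1 ->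
  1 <= x <= N -> x \in D i t.
Proof. by move=> Hi; apply: mem_cint_full => //; apply: state_in_range. Qed.

Lemma Dset_subset_succ i t : 1 <= i <= N -> cdist N i (st i t) != N.-1 ->
  {subset D i t <= D i t.+1}.
Proof.
move=> Hi Nfull x; rewrite !mem_Dset // => /andP[-> Hx] /=.
have := @state_in_range i t Hi; move: Hx Nfull => /=.
case: ifP => _ //; move: (st i t) => q Hx Nfull Hq.
have [Hlt | Eq] : q < N \/ q = N by lia.
- by rewrite modn_small //; cdist_lia.
- by rewrite Eq modnn; cdist_lia.
Qed.

Lemma elim_steps_subset t S S' :
  clos_refl_trans (pred nat) (elim_step N v G t) S S' -> {subset S' <= S}.
Proof.
elim=> [{}S {}S' [i [_ _ eqS']] | {}S | S1 S2 S3 _ sub12 _ sub23] j.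
- by rewrite eqS' inE => /andP[].
- by [].
- by move/sub23/sub12.
Qed.

Lemma elim_steps_covers t S S' :
  clos_refl_trans (pred nat) (elim_step N v G t) S S' -> covers t S -> covers t S'.
Proof.
elim=> [{}S {}S' [i [_ rem_i eqS']] covS x Hx | // | *]; last by auto.
have [j Sj xDj] := covS x Hx.
case: (eqVneq j i) => [ji | Nji]; last by exists j; rewrite // eqS' inE Sj Nji.
have [j' [Sj' Nj' xDj']] := rem_i x ltac:(by rewrite -ji).
by exists j'; rewrite // eqS' inE Sj' Nj'.
Qed.

Lemma covers_succ t S : {subset S <= agents} -> covers t S ->
  (forall j, j \in S -> cdist N j (st j t) != N.-1) -> covers t.+1 S.
Proof.
move=> S_range covS Nfull x Hx; have [j Sj xDj] := covS x Hx.
by exists j; last exact: Dset_subset_succ (S_range j Sj) (Nfull j Sj) x xDj.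
Qed.

Lemma stable_full_singleton t S j : {subset S <= agents} -> stable t S ->
  j \in S -> cdist N j (st j t) = N.-1 -> forall m, m \in S -> m = j.
Proof.
move=> S_range stS Sj full m Sm; apply/eqP/negPn/negP => Nmj.
apply: (stS m Sm) => x xDm; exists j; split; rewrite 1?eq_sym //.
apply: Dset_full (S_range j Sj) full _.
by move: xDm; rewrite (mem_Dset _ _ (S_range m Sm)) => /andP[].
Qed.

Section ValidElimination.

Variable A : nat -> pred nat.
Hypothesis A_valid : valid_elimination N v G A.

Lemma valid_elimination_range t : t <= N -> {subset A t <= agents}.
Proof.
case: A_valid => A0 Astep; elim: t => [_ j | t IH Ht j Aj]; first by rewrite A0.
have [steps _] := Astep t.+1 Ht.
exact: IH (ltnW Ht) _ (elim_steps_subset steps Aj).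
Qed.

Lemma valid_elimination_covers t : t <= N ->
  covers t (A t) \/ exists j, forall m, m \in A t -> m = j.
Proof.
case: A_valid => A0 Astep; elim: t => [_ | t IH Ht].
  by left=> x Hx; exists x; rewrite ?A0 // mem_Dset //= Hx leqnn.
have [steps _] := Astep t.+1 Ht; have subA := elim_steps_subset steps.
case: (IH (ltnW Ht)) => [covA | [j Aj]]; last by right; exists j => m /subA /Aj.
have Arange := valid_elimination_range (ltnW Ht).
have [/hasP[j] | /hasPn Nfull] :=
  boolP (has (fun j => (j \in A t) && (cdist N j (st j t) == N.-1)) (iota 1 N)).
- rewrite mem_iota => _ /andP[Aj /eqP full].
  have t_gt0 : 0 < t by case: (posnP t) full => [-> | //]; rewrite /= /cdist leqnn; lia.
  have [_ stA] := Astep t (ltac:(lia)).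
  by right; exists j => m /subA; exact: (stable_full_singleton Arange stA Aj full).
- left; apply: (elim_steps_covers steps); apply: (covers_succ Arange covA) => j Aj.
  by have := Nfull j; rewrite mem_iota Aj; apply; exact: Arange.
Qed.

End ValidElimination.

Lemma arc_subset_Dset t S a b : {subset S <= agents} -> covers t S -> stable t S ->
  a \in S -> b \in S -> (forall j, j \in S -> j != a -> cdist N a b <= cdist N a j) ->
  {subset cint_ho N a b <= D a t}.
Proof.
move=> S_range covS stS Sa Sb gap x.
have a_range : 1 <= a <= N := S_range a Sa; have b_range : 1 <= b <= N := S_range b Sb.
rewrite inE mem_cint // => /andP[/andP[x_range xab] Nxb].
apply/negPn/negP => NxDa; have [j Sj xDj] := covS x x_range.
have Nja : j != a by apply: contraNneq NxDa => <-.
have j_range : 1 <= j <= N := S_range j Sj; have := gap j Sj Nja.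
have := @state_in_range a t a_range; have := @state_in_range j t j_range.
move: NxDa xDj; rewrite !mem_Dset // x_range /= -ltnNge => NxDa xDj Hsj Hsa gap_j.
apply: (stS a Sa) => y; rewrite mem_Dset // => /andP[y_range yDa].
exists j; split => //; rewrite mem_Dset // y_range /=.
apply: leq_trans xDj; apply: ltnW; apply: (@cdist_rotate_lt N a) => //.
by apply/andP; split; cdist_lia.
Qed.

End Roundabout.

Theorem lemma10 (V : finType) (n k : nat) (T : {set {set V}}) (r : V)
    (v : nat -> V) (G : nat -> {set {set V}}) (A : nat -> pred nat) (t : nat) :
  #|V| = n -> 2 <= n ->
  is_tree T ->
  dfs_tour T r (2 * (n - 1)) v ->
  (forall u, 1 <= u <= 2 * (n - 1) -> simple_edges (G u) /\ #|T :\: G u| <= k) ->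
  valid_elimination (2 * (n - 1)) v G A ->
  1 <= t <= 2 * (n - 1) ->
  let N := 2 * (n - 1) in
  let I := [seq x <- iota 1 N | x \in A t] in
  let s := size I in
  (forall l, l < s.-1 ->
     {subset cint_ho N (nth 0 I l) (nth 0 I l.+1) <= Dset N v G (nth 0 I l) t}) /\
  {subset cint_ho N (nth 0 I s.-1) (nth 0 I 0) <= Dset N v G (nth 0 I s.-1) t}.
Proof.
(* The lemma holds for any tour sequence [v] and any graphs [G u]. *)
move=> _ n_ge2 _ _ _ Avalid /andP[t_gt0 t_leN] N I s.
have N_gt1 : 1 < N by rewrite /N; lia.
have Arange := valid_elimination_range Avalid t_leN.
have [_ stA] := Avalid.2 t (ltac:(lia)).
have memI j : (j \in I) = (j \in A t).
  by rewrite mem_filter mem_iota andb_idr // => /Arange; rewrite inE /=; lia.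
have ltn_I : sorted ltn I by apply/sorted_filter/iota_ltn_sorted; apply: ltn_trans.
have I_range j : j \in I -> 1 <= j <= N by rewrite memI; apply: Arange.
have AI p : p < s -> nth 0 I p \in A t by move=> Hp; rewrite -memI mem_nth.
have [covA | [j0 Aj0]] := valid_elimination_covers N_gt1 Avalid t_leN; last first.
  have s_le1 : s <= 1.
    apply: (@uniq_leq_size _ I [:: j0]) => [|j]; first by rewrite filter_uniq ?iota_uniq.
    by rewrite memI inE => /Aj0 ->.
  have -> : s.-1 = 0 by lia.
  by split=> [l | x]; rewrite ?ltn0 ?in_cint_hoxx.
split=> [l Hl | ].
  have Hl1 : l.+1 < s by rewrite -ltn_predRL.
  apply: (arc_subset_Dset N_gt1 Arange covA stA (AI l (ltnW Hl1)) (AI l.+1 Hl1)).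
  by move=> j; rewrite -memI; apply: sorted_cdist_next.
have [s0 | s_gt0] := posnP s; first by rewrite s0 => x; rewrite in_cint_hoxx.
have Hlast : s.-1 < s by rewrite prednK.
apply: (arc_subset_Dset N_gt1 Arange covA stA (AI s.-1 Hlast) (AI 0 s_gt0)).
by move=> j; rewrite -memI; apply: sorted_cdist_wrap.
Qed.
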